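(* Let $G=\langle A,B\rangle$ be an abstract rank one group with unipotent subgroups $A,B$ and $V$ a $\mathbb{Z}G$-module with $[V,A,A,A]=0$, $[V,G,G,G]\neq0$, $[V,G]=V$ and $C_V(G)=0$, and suppose $A_0:=C_A([V,A])\cap C_A(V/C_V(A))\neq1$. Then: (a) $V=C_V(A)\oplus[V,B]$; (b) $C_V(A)=[V,A_0]=[V,a]$ for all $a\in A_0\setminus\{1\}$; (c) $[V,A]=C_V(a)$ for all $a\in A_0\setminus\{1\}$; (d) if $A$ is not abelian, then $C_V(A)=[V,A,A]$.
   Context: $G$ acts on $V$ on the right, $[v,g]=-v+vg$; $[X,Y]$ is the subgroup generated by all such commutators, $[X,Y,Z]=[[X,Y],Z]$. Abstract rank one group with unipotent subgroups $A,B$: $G=\langle A,B\rangle$, $A\neq B$ nilpotent, for each $a\in A\setminus\{1\}$ there is $b\in B\setminus\{1\}$ with $B^a=A^b$, and for each $b\in B\setminus\{1\}$ some $a\in A\setminus\{1\}$ with $A^b=B^a$. *)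

From HB Require Import structures.
From mathcomp Require Import all_boot all_order all_algebra.
Set Implicit Arguments. Unset Strict Implicit. Unset Printing Implicit Defensive.

Section GroupDefs.
Variable gT : groupType.
Local Open Scope group_scope.

Definition seteqG (X Y : gT -> Prop) := forall x, X x <-> Y x.

Definition is_subgroup (H : gT -> Prop) :=
  H 1 /\ (forall x y, H x -> H y -> H (x * y^-1)).

Definition gen (S : gT -> Prop) : gT -> Prop :=
  fun x => forall H, is_subgroup H -> (forall s, S s -> H s) -> H x.

Definition commgrp (X Y : gT -> Prop) : gT -> Prop :=
  gen (fun z => exists x y, X x /\ Y y /\ z = commg x y).

Fixpoint lcs (H : gT -> Prop) (n : nat) : gT -> Prop :=
  match n with
  | 0 => H
  | n.+1 => commgrp (lcs H n) H
  end.

Definition nilpotent_grp (H : gT -> Prop) :=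
  exists n, forall x, lcs H n x -> x = 1.

Definition abelian_grp (H : gT -> Prop) :=
  forall x y, H x -> H y -> x * y = y * x.

Definition conjset (H : gT -> Prop) (g : gT) : gT -> Prop :=
  fun x => exists h, H h /\ x = conjg h g.

Definition rank_one (A B : gT -> Prop) :=
  is_subgroup A /\ is_subgroup B /\
  (forall g, gen (fun x => A x \/ B x) g) /\
  ~ seteqG A B /\ nilpotent_grp A /\ nilpotent_grp B /\
  (forall a, A a -> a <> 1 ->
          exists b, B b /\ b <> 1 /\ seteqG (conjset B a) (conjset A b)) /\
  (forall b, B b -> b <> 1 ->
          exists a, A a /\ a <> 1 /\ seteqG (conjset A b) (conjset B a)).
End GroupDefs.

Section ModuleDefs.
Variables (gT : groupType) (V : zmodType).
Local Open Scope ring_scope.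

Definition is_right_module (act : V -> gT -> V) :=
  [/\ (forall v, act v 1%g = v),
      (forall v g h, act v (g * h)%g = act (act v g) h)
    & (forall g v w, act (v + w) g = act v g + act w g)].

Definition seteqV (X Y : V -> Prop) := forall v, X v <-> Y v.

Definition is_addsubgroup (X : V -> Prop) :=
  X 0 /\ (forall v w, X v -> X w -> X (v - w)).

Definition genV (S : V -> Prop) : V -> Prop :=
  fun v => forall X, is_addsubgroup X -> (forall s, S s -> X s) -> X v.

Variable act : V -> gT -> V.

Definition commV (v : V) (g : gT) : V := - v + act v g.

Definition commVS (X : V -> Prop) (Y : gT -> Prop) : V -> Prop :=
  genV (fun z => exists x y, X x /\ Y y /\ z = commV x y).

Definition setTV : V -> Prop := fun _ => True.

Definition centV (Y : gT -> Prop) : V -> Prop :=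
  fun v => forall y, Y y -> act v y = v.

Definition centG (Y : gT -> Prop) (X : V -> Prop) : gT -> Prop :=
  fun y => Y y /\ forall v, X v -> act v y = v.

(* C_Y(V/W) : elements of Y acting trivially on V/W, i.e. [V,y] <= W *)
Definition centGquot (Y : gT -> Prop) (W : V -> Prop) : gT -> Prop :=
  fun y => Y y /\ forall v, W (commV v y).

Definition directsum_eq (X Y : V -> Prop) :=
  (forall v, exists x y, X x /\ Y y /\ v = x + y) /\
  (forall v, X v -> Y v -> v = 0).
End ModuleDefs.

(* Let a0 be a nontrivial element of A_0 and pick n with A^n = B; then b := a0^n is a
   nontrivial element of B which centralizes [V,B] and has [V,b] <= C_V(B).  Since G is
   generated by a and B (any a in A \ 1), or by A and b, and [V,G] = V, every generating
   set S u T with [V,S] <= X and [V,T] <= Y yields V = X + Y.  Modulo the intersection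
   C_V(A) n [V,B] = 0 (an element there is fixed by A and b, hence by G), each part then
   follows by choosing the right generators: a0 and B for (a), a and B for (b), A and b
   for (c), and a nontrivial commutator c = [x,y] of A together with B for (d), where
   [V,c] <= [V,A,A] because v |-> [w,v] is a homomorphism modulo [V,A,A]. *)
From HB Require Import structures.
From mathcomp Require Import all_boot all_order all_algebra.
From Stdlib Require Import Classical.
Set Implicit Arguments. Unset Strict Implicit. Unset Printing Implicit Defensive.
Import GRing.Theory.

Section Subgroups.
Local Open Scope group_scope.
Variable gT : groupType.
Implicit Types (H S : gT -> Prop) (x y : gT).

Definition generates S := forall g, gen S g.

Lemma subgroupV H x : is_subgroup H -> H x -> H x^-1.
Proof. by move=> [H1 HB] Hx; have := HB _ _ H1 Hx; rewrite mul1g. Qed.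

Lemma subgroupM H x y : is_subgroup H -> H x -> H y -> H (x * y).
Proof. by move=> sH Hx Hy; have := sH.2 _ _ Hx (subgroupV sH Hy); rewrite invgK. Qed.

Lemma subgroupJ H x y : is_subgroup H -> H x -> H y -> H (x ^ y).
Proof.
by move=> sH Hx Hy; rewrite conjgE; apply: subgroupM (subgroupV sH Hy) _ => //;
  apply: subgroupM.
Qed.

Lemma subgroupR H x y : is_subgroup H -> H x -> H y -> H [~ x, y].
Proof. by move=> sH Hx Hy; apply: subgroupM (subgroupV sH Hx) (subgroupJ sH Hx Hy). Qed.

Section RankOne.
Variables A B : gT -> Prop.
Hypothesis hAB : rank_one A B.

Lemma rank_one_conj_AB a : A a -> a <> 1 ->
  exists n, (forall d, A d -> B (d ^ n)) /\ (forall c, B c -> exists2 d, A d & c = d ^ n).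
Proof.
move=> Aa a_neq1; have [_ [_ [_ [_ [_ [_ [axA _]]]]]]] := hAB.
have [b [_ [_ eqBA]]] := axA a Aa a_neq1.
exists (b * a^-1); split=> [d Ad | c Bc].
- have /(eqBA _).2 [e [Be e_eq]] : conjset A b (d ^ b) by exists d.
  by rewrite conjgM e_eq conjgK.
- have /(eqBA _).1 [d [Ad d_eq]] : conjset B a (c ^ a) by exists c.
  by exists d; rewrite // conjgM -d_eq conjgK.
Qed.

(* A = (B^a)^(b^-1) for suitable b in B, so A lies in the group generated by a and B. *)
Lemma rank_one_gen_eltA_B a : A a -> a <> 1 -> generates (fun s => s = a \/ B s).
Proof.
move=> Aa a_neq1 g H sH Hgen.
have [_ [_ [genAB [_ [_ [_ [axA _]]]]]]] := hAB.
have HB c : B c -> H c by move=> Bc; apply: Hgen; right.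
apply: (genAB g H sH) => s [As | /HB //].
have [b [Bb [_ eqBA]]] := axA a Aa a_neq1.
have /(eqBA _).2 [c [Bc c_eq]] : conjset A b (s ^ b) by exists s.
have -> : s = (c ^ a) ^ b^-1 by rewrite -c_eq conjgK.
by apply: subgroupJ (subgroupV sH (HB _ Bb)) => //; apply: subgroupJ (HB _ Bc) _ => //;
  apply: Hgen; left.
Qed.

Lemma rank_one_gen_A_eltB b : B b -> b <> 1 -> generates (fun s => A s \/ s = b).
Proof.
move=> Bb b_neq1 g H sH Hgen.
have [_ [_ [genAB [_ [_ [_ [_ axB]]]]]]] := hAB.
have HA c : A c -> H c by move=> Ac; apply: Hgen; left.
apply: (genAB g H sH) => s [/HA // | Bs].
have [a [Aa [_ eqAB]]] := axB b Bb b_neq1.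
have /(eqAB _).2 [c [Ac c_eq]] : conjset B a (s ^ a) by exists s.
have -> : s = (c ^ b) ^ a^-1 by rewrite -c_eq conjgK.
by apply: subgroupJ (subgroupV sH (HA _ Aa)) => //; apply: subgroupJ (HA _ Ac) _ => //;
  apply: Hgen; right.
Qed.

End RankOne.
End Subgroups.

Section AddSubgroups.
Local Open Scope ring_scope.
Variable V : zmodType.
Implicit Types (X Y Z S : V -> Prop) (v w : V).

Definition addV X Y v := exists x y, X x /\ Y y /\ v = x + y.

Lemma addsubgroupN X v : is_addsubgroup X -> X v -> X (- v).
Proof. by move=> [X0 XB] Xv; have := XB _ _ X0 Xv; rewrite sub0r. Qed.

Lemma addsubgroupD X v w : is_addsubgroup X -> X v -> X w -> X (v + w).
Proof. by move=> sX Xv Xw; have := sX.2 _ _ Xv (addsubgroupN sX Xw); rewrite opprK. Qed.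

Lemma genV_in S s : S s -> genV S s.
Proof. by move=> Ss X _; apply. Qed.

Lemma genV_addsubgroup S : is_addsubgroup (genV S).
Proof.
split=> [X [X0 _] _ // | v w Sv Sw X sX SX].
exact: sX.2 _ _ (Sv X sX SX) (Sw X sX SX).
Qed.

Lemma genV_ind S X v : is_addsubgroup X -> (forall s, S s -> X s) -> genV S v -> X v.
Proof. by move=> sX SX; apply. Qed.

Lemma genV_mono S S' v : (forall s, S s -> S' s) -> genV S v -> genV S' v.
Proof. by move=> SS' Sv X sX S'X; apply: Sv => // s /SS'/S'X. Qed.

Lemma addV_addsubgroup X Y :
  is_addsubgroup X -> is_addsubgroup Y -> is_addsubgroup (addV X Y).
Proof.
move=> sX sY; split.
  by exists 0, 0; rewrite addr0; split; [exact: sX.1 | split; [exact: sY.1 |]].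
move=> _ _ [x1 [y1 [Xx1 [Yy1 ->]]]] [x2 [y2 [Xx2 [Yy2 ->]]]].
exists (x1 - x2), (y1 - y2); split; first exact: sX.2.
by split; [exact: sY.2 | rewrite opprD addrACA].
Qed.

Lemma sub_of_addV_meet0 X Y Z : is_addsubgroup Z -> (forall v, addV X Y v) ->
  (forall v, X v -> Z v) -> (forall v, Z v -> Y v -> v = 0) -> forall v, Z v -> X v.
Proof.
move=> sZ XY_full XZ ZY0 v Zv; have [x [y [Xx [Yy v_eq]]]] := XY_full v.
have y_eq : y = v - x by rewrite v_eq addrAC subrr add0r.
have y0 : y = 0 by apply: ZY0 => //; rewrite y_eq; exact: sZ.2 _ _ Zv (XZ _ Xx).
by rewrite v_eq y0 addr0.
Qed.

Lemma quasi_hom_commg (gT : groupType) (H : gT -> Prop) (W : V -> Prop) (p : gT -> V) :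
  is_subgroup H -> is_addsubgroup W -> p 1%g = 0 ->
  (forall g h, H g -> H h -> W (p (g * h)%g - (p g + p h))) ->
  forall x y, H x -> H y -> W (p [~ x, y]%g).
Proof.
move=> sH sW p1 pM x y Hx Hy.
have cong_trans a b c : W (a - b) -> W (b - c) -> W (a - c).
  by move=> Wab Wbc; have := addsubgroupD sW Wab Wbc; rewrite addrA subrK.
have cong_add a b c d : W (a - b) -> W (c - d) -> W ((a + c) - (b + d)).
  by move=> Wab Wcd; have := addsubgroupD sW Wab Wcd; rewrite opprD addrACA.
have pV g : H g -> W (p g^-1%g - - p g).
  move=> Hg; rewrite opprK; have := pM _ _ (subgroupV sH Hg) Hg.
  by rewrite mulVg p1 sub0r => /(addsubgroupN sW); rewrite opprK.
have HV := subgroupV sH; have HM := subgroupM sH.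
have : W (p [~ x, y]%g - (- p x + (- p y + (p x + p y)))).
  rewrite /commg /conjg.
  apply: (cong_trans _ _ _ (pM _ _ (HV _ Hx) (HM _ _ (HV _ Hy) (HM _ _ Hx Hy)))).
  apply: (cong_add _ _ _ _ (pV _ Hx)).
  exact: (cong_trans _ _ _ (pM _ _ (HV _ Hy) (HM _ _ Hx Hy))
                           (cong_add _ _ _ _ (pV _ Hy) (pM _ _ Hx Hy))).
by rewrite addrA -opprD addNr subr0.
Qed.

End AddSubgroups.

Section RightModule.
Local Open Scope ring_scope.
Variables (gT : groupType) (V : zmodType) (act : V -> gT -> V).
Hypothesis hm : is_right_module act.
Implicit Types (v w : V) (g h x y : gT) (S T Y : gT -> Prop) (X W : V -> Prop).
Local Notation comm := (commV act).
Local Notation VX := (commVS act (@setTV V)).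

Lemma act1 v : act v 1%g = v.
Proof. by case: hm. Qed.

Lemma actM v g h : act (act v g) h = act v (g * h)%g.
Proof. by case: hm => _ actM_ _; rewrite actM_. Qed.

Lemma actD v w g : act (v + w) g = act v g + act w g.
Proof. by case: hm. Qed.

Lemma act0 g : act 0 g = 0.
Proof. by apply: (addrI (act 0 g)); rewrite -actD !addr0. Qed.

Lemma actN v g : act (- v) g = - act v g.
Proof. by apply: (addrI (act v g)); rewrite -actD !subrr act0. Qed.

Lemma actB v w g : act (v - w) g = act v g - act w g.
Proof. by rewrite actD actN. Qed.

Lemma actKV v g : act (act v g) g^-1%g = v.
Proof. by rewrite actM mulgV act1. Qed.

Lemma actVK v g : act (act v g^-1%g) g = v.
Proof. by rewrite actM mulVg act1. Qed.

Lemma actJ v x y : act v (x ^ y)%g = act (act (act v y^-1%g) x) y.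
Proof. by rewrite conjgE !actM. Qed.

Lemma actE v g : act v g = v + comm v g.
Proof. by rewrite /commV addNKr. Qed.

Lemma commV1 v : comm v 1%g = 0.
Proof. by rewrite /commV act1 addNr. Qed.

Lemma commVD v w g : comm (v + w) g = comm v g + comm w g.
Proof. by rewrite /commV actD opprD addrACA. Qed.

Lemma commVM v g h : comm v (g * h)%g = comm v g + comm (act v g) h.
Proof. by rewrite /commV -actM addrA addrK. Qed.

Lemma commVV v g : comm v g^-1%g = - comm (act v g^-1%g) g.
Proof. by rewrite /commV actVK opprD opprK addrC. Qed.

Lemma commVJ v x y : comm v (x ^ y)%g = act (comm (act v y^-1%g) x) y.
Proof. by rewrite /commV actJ actD actN actVK. Qed.

Lemma centV_addsubgroup Y : is_addsubgroup (centV act Y).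
Proof. by split=> [y _ | v w Cv Cw y Yy]; rewrite ?act0 // actB Cv ?Cw. Qed.

Lemma fixed_addsubgroup g : is_addsubgroup (fun v => act v g = v).
Proof. by split=> [|v w gv gw]; rewrite ?act0 // actB gv gw. Qed.

Lemma stab_subgroup v : is_subgroup (fun g => act v g = v).
Proof. by split=> [|x y xv yv]; rewrite ?act1 // -actM xv -{1}yv actKV. Qed.

Lemma commVS_in X Y v y : X v -> Y y -> commVS act X Y (comm v y).
Proof. by move=> Xv Yy; apply: genV_in; exists v, y. Qed.

Lemma cent_of_commVS_eq0 X Y :
  (forall v, commVS act X Y v -> v = 0) -> forall v, X v -> centV act Y v.
Proof.
move=> XY0 v Xv y Yy; have /eqP := XY0 _ (commVS_in Xv Yy).
by rewrite /commV addrC subr_eq0 => /eqP.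
Qed.

Lemma commV_commg_in_commVS2 H w x y : is_subgroup H -> H x -> H y ->
  commVS act (VX H) H (comm w [~ x, y]%g).
Proof.
move=> sH Hx Hy; apply: (quasi_hom_commg sH (genV_addsubgroup _) (commV1 w)) => // g h Hg Hh.
rewrite commVM [act w g]actE commVD addrA [X in X - _]addrC addrK.
exact: commVS_in (commVS_in (I : setTV w) Hg) Hh.
Qed.

Section Generators.
Hypothesis commVG_full : seteqV (commVS act (@setTV V) (fun _ => True)) (@setTV V).

Lemma full_of_commV_generators S W : generates S -> is_addsubgroup W ->
  (forall v s, S s -> W (comm v s)) -> forall v, W v.
Proof.
move=> genS sW SW v.
have commW g : forall w, W (comm w g).
  apply: (genS g (fun g => forall w, W (comm w g))); last by move=> s Ss w; exact: SW.
  split=> [w | x y Wx Wy w]; first by rewrite commV1; exact: sW.1.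
  by rewrite commVM commVV; exact: sW.2 _ _ (Wx w) (Wy _).
by have := (commVG_full v).2 I; apply: genV_ind => // _ [w [g [_ [_ ->]]]].
Qed.

Lemma addV_of_commV_generators S T X W : is_addsubgroup X -> is_addsubgroup W ->
  generates (fun g => S g \/ T g) ->
  (forall v s, S s -> X (comm v s)) -> (forall v t, T t -> W (comm v t)) ->
  forall v, addV X W v.
Proof.
move=> sX sW genST SX TW; apply: full_of_commV_generators genST (addV_addsubgroup sX sW) _.
move=> v s [Ss | Ts].
  by exists (comm v s), 0; rewrite addr0; split; [exact: SX | split; [exact: sW.1 |]].
by exists 0, (comm v s); rewrite add0r; split; [exact: sX.1 | split; [exact: TW |]].
Qed.

End Generators.

Lemma fixed_by_generators_eq0 S v :
  (forall v, centV act (fun _ => True) v -> v = 0) -> generates S ->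
  (forall s, S s -> act v s = v) -> v = 0.
Proof.
by move=> centG0 genS Sv; apply: centG0 => g _; exact: (genS g _ (stab_subgroup v) Sv).
Qed.

End RightModule.

Definition A_zero (gT : groupType) (V : zmodType) (act : V -> gT -> V) (A : gT -> Prop) :=
  fun a => centG act A (commVS act (@setTV V) A) a /\ centGquot act A (centV act A) a.

Section RankOneModule.
Local Open Scope ring_scope.
Variables (gT : groupType) (A B : gT -> Prop) (V : zmodType) (act : V -> gT -> V).
Hypotheses (hAB : rank_one A B) (hm : is_right_module act).
Hypothesis commVG_full : seteqV (commVS act (@setTV V) (fun _ => True)) (@setTV V).
Hypothesis centVG0 : forall v, centV act (fun _ => True) v -> v = 0.
Local Notation comm := (commV act).
Local Notation CV := (centV act).
Local Notation VX := (commVS act (@setTV V)).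
Local Notation A0 := (A_zero act A).

Lemma A_zero_conj_B a : A0 a -> a <> 1%g ->
  exists b, [/\ B b, b <> 1%g, forall v, CV B (comm v b) & forall x, VX B x -> act x b = x].
Proof.
move=> [[Aa fixVA] [_ commV_centA]] a_neq1.
have [n [AnB BAn]] := rank_one_conj_AB hAB Aa a_neq1.
exists (a ^ n)%g; split.
- exact: AnB.
- by move=> /eqP; rewrite conjg_eq1 => /eqP.
- by move=> v c /BAn [d Ad ->]; rewrite commVJ // actJ // actKV // commV_centA.
- move=> x; apply: genV_ind (fixed_addsubgroup hm _) _ => _ [v [c [_ [/BAn [d Ad ->] ->]]]].
  by rewrite commVJ // actJ // actKV // fixVA //; exact: (commVS_in (I : setTV _) Ad).
Qed.

Section NontrivialAZero.
Variable a0 : gT.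
Hypotheses (a0A0 : A0 a0) (a0_neq1 : a0 <> 1%g).

Lemma centA_commB_eq0 v : CV A v -> VX B v -> v = 0.
Proof.
have [b [Bb b_neq1 _ fix_commVB]] := A_zero_conj_B a0A0 a0_neq1.
move=> CAv VBv; apply: (fixed_by_generators_eq0 hm centVG0 (rank_one_gen_A_eltB hAB Bb b_neq1)).
by move=> s [As | ->]; [exact: CAv | exact: fix_commVB].
Qed.

Lemma addV_commA_centB v : addV (VX A) (CV B) v.
Proof.
have [b [Bb b_neq1 commVb_centB _]] := A_zero_conj_B a0A0 a0_neq1.
apply: (addV_of_commV_generators hm commVG_full (genV_addsubgroup _) (centV_addsubgroup hm _)
          (rank_one_gen_A_eltB hAB Bb b_neq1)) => [w s As | w _ ->].
  exact: (commVS_in (I : setTV w) As).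
exact: commVb_centB.
Qed.

Lemma directsum_centA_commB : directsum_eq (CV A) (VX B).
Proof.
split; last exact: centA_commB_eq0.
have [[Aa0 _] [_ commV_centA]] := a0A0.
apply: (addV_of_commV_generators hm commVG_full (centV_addsubgroup hm _) (genV_addsubgroup _)
          (rank_one_gen_eltA_B hAB Aa0 a0_neq1)) => [w _ -> | w s Bs].
  exact: commV_centA.
exact: (commVS_in (I : setTV w) Bs).
Qed.

Lemma centA_eq_commV_elt a : A0 a -> a <> 1%g -> seteqV (CV A) (VX (fun x => x = a)).
Proof.
move=> [[Aa _] [_ commV_centA]] a_neq1.
have commVa_centA v : VX (fun x => x = a) v -> CV A v.
  by apply: genV_ind (centV_addsubgroup hm _) _ => _ [w [_ [_ [-> ->]]]]; exact: commV_centA.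
move=> v; split=> [|/commVa_centA //].
apply: (sub_of_addV_meet0 (centV_addsubgroup hm _) _ commVa_centA centA_commB_eq0).
apply: (addV_of_commV_generators hm commVG_full (genV_addsubgroup _) (genV_addsubgroup _)
          (rank_one_gen_eltA_B hAB Aa a_neq1)) => [w _ -> | w s Bs].
  exact: (commVS_in (I : setTV w) (erefl a)).
exact: (commVS_in (I : setTV w) Bs).
Qed.

Lemma centA_eq_commV_A_zero : seteqV (CV A) (VX A0).
Proof.
move=> v; split=> [/(centA_eq_commV_elt a0A0 a0_neq1 v).1 | ].
  by apply: genV_mono => _ [w [_ [_ [-> ->]]]]; exists w, a0.
apply: genV_ind (centV_addsubgroup hm _) _ => _ [w [a [_ [[_ [_ commV_centA]] ->]]]].
exact: commV_centA.
Qed.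

Lemma commA_eq_cent_elt a : A0 a -> a <> 1%g -> seteqV (VX A) (CV (fun x => x = a)).
Proof.
move=> [[Aa fixVA] _] a_neq1 v; split=> [VAv _ -> | Cav]; first exact: fixVA.
have [m [y [VAm [CBy v_eq]]]] := addV_commA_centB v.
have fix_y : act y a = y.
  by have := Cav a erefl; rewrite v_eq actD // fixVA //; exact: addrI.
have y0 : y = 0.
  apply: (fixed_by_generators_eq0 hm centVG0 (rank_one_gen_eltA_B hAB Aa a_neq1)).
  by move=> s [-> | Bs]; [exact: fix_y | exact: CBy].
by rewrite v_eq y0 addr0.
Qed.

Hypothesis commVAAA_eq0 : forall v, commVS act (commVS act (VX A) A) A v -> v = 0.

Lemma centA_eq_commVAA : ~ abelian_grp A -> seteqV (CV A) (commVS act (VX A) A).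
Proof.
move=> nabA; have [sA _] := hAB.
have VAA_centA := cent_of_commVS_eq0 commVAAA_eq0.
have [x [y [Ax [Ay xy_neq]]]] : exists x y, A x /\ A y /\ (x * y <> y * x)%g.
  apply: NNPP => no_pair; apply: nabA => x y Ax Ay; apply: NNPP => xy_neq.
  by apply: no_pair; exists x, y.
have Ac : A [~ x, y]%g := subgroupR sA Ax Ay.
have c_neq1 : [~ x, y]%g <> 1%g.
  by move=> c1; apply: xy_neq; rewrite (commgC x y) c1 mulg1.
move=> v; split=> [|/VAA_centA //].
apply: (sub_of_addV_meet0 (centV_addsubgroup hm _) _ VAA_centA centA_commB_eq0).
apply: (addV_of_commV_generators hm commVG_full (genV_addsubgroup _) (genV_addsubgroup _)
          (rank_one_gen_eltA_B hAB Ac c_neq1)) => [w _ -> | w s Bs].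
  exact (commV_commg_in_commVS2 hm w sA Ax Ay).
exact: (commVS_in (I : setTV w) Bs).
Qed.

End NontrivialAZero.
End RankOneModule.

Unset Implicit Arguments.
Set Strict Implicit.

Theorem lemma3p11 (gT : groupType) (A B : gT -> Prop)
  (V : zmodType) (act : V -> gT -> V) :
  rank_one A B ->
  is_right_module act ->
  (forall v, commVS act (commVS act (commVS act (@setTV V) A) A) A v -> v = 0%R) ->
  (exists v, commVS act (commVS act (commVS act (@setTV V) (fun _ => True))
                (fun _ => True)) (fun _ => True) v /\ v <> 0%R) ->
  seteqV (commVS act (@setTV V) (fun _ => True)) (@setTV V) ->
  (forall v, centV act (fun _ => True) v -> v = 0%R) ->
  let A0 := fun a => centG act A (commVS act (@setTV V) A) a /\
                     centGquot act A (centV act A) a in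
  (exists a, A0 a /\ a <> 1%g) ->
  [/\ directsum_eq (centV act A) (commVS act (@setTV V) B),
      seteqV (centV act A) (commVS act (@setTV V) A0) /\
                (forall a, A0 a -> a <> 1%g ->
                   seteqV (centV act A) (commVS act (@setTV V) (fun x => x = a))),
      (forall a, A0 a -> a <> 1%g ->
                   seteqV (commVS act (@setTV V) A) (centV act (fun x => x = a)))
    & (~ abelian_grp A ->
                   seteqV (centV act A) (commVS act (commVS act (@setTV V) A) A))].
Proof.
move=> hAB hm commVAAA_eq0 _ commVG_full centVG0 A0 [a0 [a0A0 a0_neq1]].
split.
- exact (directsum_centA_commB hAB hm commVG_full centVG0 a0A0 a0_neq1).
- split; first exact (centA_eq_commV_A_zero hAB hm commVG_full centVG0 a0A0 a0_neq1).
  exact (centA_eq_commV_elt hAB hm commVG_full centVG0 a0A0 a0_neq1).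
- exact (commA_eq_cent_elt hAB hm commVG_full centVG0 a0A0 a0_neq1).
- exact (centA_eq_commVAA hAB hm commVG_full centVG0 a0A0 a0_neq1 commVAAA_eq0).
Qed.
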